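(* Let $\mathbf{V}\in\mathbb{R}^{n\times(k+1)}$ have orthonormal columns and suppose $\mathbf{W}\in\mathbb{R}^{k\times(k+1)}$ satisfies $$\max_{i\in[n]}\Big\{\min_{l\in[k]}\|\mathbf{V}_{i,:}-\mathbf{W}_{l,:}\|\Big\}=\epsilon.$$ Then $\epsilon\ge(3n(k+1)^2)^{-1}$.
   Context: $[n]=\{1,\dots,n\}$; $\|\cdot\|$ is the Euclidean norm; $\mathbf{V}_{i,:}$ denotes the $i$-th row of $\mathbf{V}$. *)

From HB Require Import structures.
From mathcomp Require Import all_boot all_order all_algebra.
From mathcomp Require Import reals.
Set Implicit Arguments. Unset Strict Implicit. Unset Printing Implicit Defensive.
Import Order.TTheory GRing.Theory Num.Theory.
Local Open Scope ring_scope.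

Definition rnorm (R : realType) (m : nat) (v : 'rV[R]_m) : R :=
  Num.sqrt (\sum_(j < m) v 0 j ^+ 2).

Definition rowdist (R : realType) (n k m : nat) (V : 'M[R]_(n, m)) (W : 'M[R]_(k, m))
  (i : 'I_n) (l : 'I_k) : R := rnorm (row i V - row l W).

(* min_{l in [k]} ||V_i - W_l||.  The seed of the iterated min is the maximum of the
   same (nonnegative) distances, so for k > 0 the result is exactly the minimum. *)
Definition mindist (R : realType) (n k m : nat) (V : 'M[R]_(n, m)) (W : 'M[R]_(k, m))
  (i : 'I_n) : R :=
  let seed := (\big[Num.max/0]_(l < k) rowdist V W i l) in
  \big[Num.min/seed]_(l < k) rowdist V W i l.

(* max_{i in [n]} min_l ||V_i - W_l||; seed 0 is harmless since distances are >= 0 *)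
Definition maxmindist (R : realType) (n k m : nat) (V : 'M[R]_(n, m)) (W : 'M[R]_(k, m)) : R :=
  \big[Num.max/0]_(i < n) mindist V W i.

(* W has fewer rows than columns, so W c = 0 for some c <> 0.  For every
   row l of W, (V c)_i = (V_i - W_l) . c as W_l . c = 0, hence
   |(V c)_i| <= eps |c| by Cauchy-Schwarz, choosing l nearest to V_i.
   Since V is an isometry, |c|^2 = |V c|^2 <= n eps^2 |c|^2, i.e.
   eps >= 1 / sqrt n, which is far stronger than the stated bound. *)
From HB Require Import structures.
From mathcomp Require Import all_boot all_order all_algebra.
From mathcomp Require Import reals ring lra.
Set Implicit Arguments. Unset Strict Implicit. Unset Printing Implicit Defensive.
Import Order.TTheory GRing.Theory Num.Theory.
Local Open Scope ring_scope.

Lemma sum_CauchySchwarz (R : realFieldType) (m : nat) (a b : 'I_m -> R) :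
  (\sum_i a i * b i) ^+ 2 <= (\sum_i a i ^+ 2) * (\sum_i b i ^+ 2).
Proof.
have lagrange i j : (a i * b j - a j * b i) ^+ 2 =
    a i ^+ 2 * b j ^+ 2 + b i ^+ 2 * a j ^+ 2 - 2 * (a i * b i) * (a j * b j).
  by ring.
have : 0 <= \sum_i \sum_j (a i * b j - a j * b i) ^+ 2.
  by apply: sumr_ge0 => i _; apply: sumr_ge0 => j _; exact: sqr_ge0.
under eq_bigr do under eq_bigr do rewrite lagrange.
under eq_bigr do rewrite sumrB big_split /= -!mulr_sumr.
rewrite sumrB big_split /= -!mulr_suml -mulr_sumr.
set A := \sum_i a i ^+ 2; set B := \sum_i b i ^+ 2; set C := \sum_i a i * b i.
nra.
Qed.

Lemma kermx_col_neq0 (F : fieldType) (k m : nat) (W : 'M[F]_(k, m)) :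
  (k < m)%N -> exists2 c : 'cV[F]_m, c != 0 & W *m c = 0.
Proof.
move=> lt_km; have : kermx W^T != 0.
  by rewrite -mxrank_eq0 mxrank_ker subn_eq0 -ltnNge (leq_ltn_trans (rank_leq_col _)).
case/rowV0Pn => v /sub_kermxP vW v_neq0; exists v^T; first by rewrite trmx_eq0.
by rewrite -[W]trmxK -trmx_mul vW trmx0.
Qed.

Section SumSquares.
Variable R : realFieldType.

Lemma sum_sqr_col (m : nat) (c : 'cV[R]_m) : \sum_j c j 0 ^+ 2 = (c^T *m c) 0 0.
Proof. by rewrite mxE; apply: eq_bigr => j _; rewrite mxE expr2. Qed.

Lemma sum_sqr_col_gt0 (m : nat) (c : 'cV[R]_m) : c != 0 -> 0 < \sum_j c j 0 ^+ 2.
Proof.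
move=> c_neq0; rewrite lt_def sumr_ge0 ?andbT => [|j _]; last exact: sqr_ge0.
apply: contra c_neq0 => /eqP sum0; apply/eqP/matrixP => j z.
rewrite ord1 mxE; apply/eqP; rewrite -sqrf_eq0; apply/eqP.
exact: (psumr_eq0P (fun j _ => sqr_ge0 (c j 0)) sum0).
Qed.

Lemma sum_sqr_isometry (n m : nat) (V : 'M[R]_(n, m)) (c : 'cV[R]_m) :
  V^T *m V = 1%:M -> \sum_i (V *m c) i 0 ^+ 2 = \sum_j c j 0 ^+ 2.
Proof.
by move=> VtV; rewrite !sum_sqr_col trmx_mul -mulmxA (mulmxA V^T) VtV mul1mx.
Qed.

End SumSquares.

Section Distances.
Variables (R : realType) (n k m : nat) (V : 'M[R]_(n, m)) (W : 'M[R]_(k, m)).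

Lemma sqr_rowdist i l : rowdist V W i l ^+ 2 = \sum_j (V i j - W l j) ^+ 2.
Proof.
rewrite /rowdist /rnorm sqr_sqrtr; last by apply: sumr_ge0 => j _; exact: sqr_ge0.
by apply: eq_bigr => j _; rewrite !mxE.
Qed.

Lemma rowdist_le_mindist i : (0 < k)%N -> exists l, rowdist V W i l <= mindist V W i.
Proof.
move=> k_gt0; rewrite /mindist.
apply: (big_ind (fun x => exists l, rowdist V W i l <= x)).
- by exists (Ordinal k_gt0); exact: (le_bigmax _ (rowdist V W i)).
- move=> x y [l1 le1] [l2 le2].
  by rewrite /Order.min; case: ifP => _; [exists l1 | exists l2].
- by move=> l _; exists l.
Qed.

Lemma mindist_le_maxmindist i : mindist V W i <= maxmindist V W.
Proof. exact: (le_bigmax _ (mindist V W)). Qed.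

Lemma sqr_mulmx_le_rowdist (c : 'cV[R]_m) i l : W *m c = 0 ->
  (V *m c) i 0 ^+ 2 <= rowdist V W i l ^+ 2 * \sum_j c j 0 ^+ 2.
Proof.
move=> Wc0; have : (W *m c) l 0 = 0 by rewrite Wc0 mxE.
rewrite mxE => Wlc0.
have -> : (V *m c) i 0 = \sum_j (V i j - W l j) * c j 0.
  by rewrite mxE; under [RHS]eq_bigr do rewrite mulrBl; rewrite sumrB Wlc0 subr0.
by rewrite sqr_rowdist; exact: sum_CauchySchwarz.
Qed.

Lemma mul_sqr_maxmindist_ge1 : (0 < k)%N -> (k < m)%N -> V^T *m V = 1%:M ->
  1 <= n%:R * maxmindist V W ^+ 2.
Proof.
move=> k_gt0 lt_km VtV; have [c c_neq0 Wc0] := kermx_col_neq0 W lt_km.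
have c_gt0 := sum_sqr_col_gt0 c_neq0.
have coord_le i : (V *m c) i 0 ^+ 2 <= maxmindist V W ^+ 2 * \sum_j c j 0 ^+ 2.
  have [l le_l] := rowdist_le_mindist i k_gt0.
  apply: (le_trans (sqr_mulmx_le_rowdist i l Wc0)); rewrite ler_pM2r //.
  have le_max := le_trans le_l (mindist_le_maxmindist i).
  by rewrite ler_sqr ?nnegrE ?sqrtr_ge0 ?(le_trans (sqrtr_ge0 _) le_max).
rewrite -(ler_pM2r c_gt0) mul1r -{1}(sum_sqr_isometry c VtV).
apply: le_trans (ler_sum _ (fun i _ => coord_le i)) _.
by rewrite big_const_ord iter_addr_0 mulr_natl mulrnAl.
Qed.

End Distances.

Theorem corollary7 (R : realType) (n k : nat) (V : 'M[R]_(n, k.+1))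
  (W : 'M[R]_(k, k.+1)) (eps : R) :
  (0 < k)%N ->
  V^T *m V = 1%:M ->
  maxmindist V W = eps ->
  eps >= (3 * n%:R * (k.+1)%:R ^+ 2)^-1.
Proof.
move=> k_gt0 VtV <-.
have one_le := mul_sqr_maxmindist_ge1 W k_gt0 (ltnSn k) VtV.
have e_ge0 : 0 <= maxmindist V W by exact: bigmax_ge_id.
move: (maxmindist V W) one_le e_ge0 => e one_le e_ge0.
have n_ge1 : 1 <= n%:R :> R.
  by rewrite ler1n lt0n; apply: contraTneq one_le => ->; rewrite mul0r ler10.
have k_ge1 : 1 <= (k.+1)%:R :> R by rewrite ler1n.
have ne_ge1 : 1 <= n%:R * e.
  case: (lerP e 1) => [e_le1 | e_gt1].
    apply: le_trans one_le _; rewrite ler_pM2l ?(lt_le_trans ltr01) //.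
    by rewrite expr2 ler_piMr.
  by rewrite -[X in X <= _]mulr1; apply: ler_pM; rewrite ?ler01 ?(ltW e_gt1).
have denom_gt0 : 0 < 3 * n%:R * (k.+1)%:R ^+ 2 :> R.
  by rewrite !mulr_gt0 ?exprn_gt0 // (lt_le_trans ltr01).
rewrite -[X in X <= _]mulr1 ler_pdivrMl //.
nra.
Qed.
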